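(* Let $\mathscr A$ and $\mathscr B$ be Hopf algebras over a field $\mathbb F$ (with comultiplications $\Delta_{\mathscr A},\Delta_{\mathscr B}$, counits $\varepsilon_{\mathscr A},\varepsilon_{\mathscr B}$ and antipodes $\sigma_{\mathscr A},\sigma_{\mathscr B}$, where $\sigma_{\mathscr B}$ is invertible), and let $\psi:\mathscr A\times\mathscr B\to\mathbb F$ be a skew-Hopf pairing. Let $\mathscr A*\mathscr B$ be the free product of the $\mathbb F$-algebras $\mathscr A$ and $\mathscr B$, and let $\mathcal I$ be the two-sided ideal of $\mathscr A*\mathscr B$ generated by the elements $$h_{a,b}:=\sum (b_2*a_2)\,\psi(a_1,b_1)-\sum (a_1*b_1)\,\psi(a_2,b_2)\qquad(a\in\mathscr A,\ b\in\mathscr B),$$ where $\Delta_{\mathscr A}(a)=\sum a_1\otimes a_2$ and $\Delta_{\mathscr B}(b)=\sum b_1\otimes b_2$. Suppose $X_{\mathscr A}\subseteq\mathscr A$ and $X_{\mathscr B}\subseteq\mathscr B$ are generating sets (as algebras) of $\mathscr A$ and $\mathscr B$ such that $\Delta_{\mathscr A}(X_{\mathscr A})\subseteq \mathrm{span}_{\mathbb F}X_{\mathscr A}\otimes\mathrm{span}_{\mathbb F}X_{\mathscr A}$ and $\Delta_{\mathscr B}(X_{\mathscr B})\subseteq \mathrm{span}_{\mathbb F}X_{\mathscr B}\otimes\mathrm{span}_{\mathbb F}X_{\mathscr B}$. Then $\mathcal I$ is generated by the elements $h_{a,b}$ with $a\in X_{\mathscr A}$ and $b\in X_{\mathscr 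B}$.
   Context: A skew-Hopf pairing of $\mathscr A$ and $\mathscr B$ is an $\mathbb F$-bilinear form $\psi:\mathscr A\times\mathscr B\to\mathbb F$ such that: (HP1) $\psi(1,b)=\varepsilon_{\mathscr B}(b)$ and $\psi(a,1)=\varepsilon_{\mathscr A}(a)$; (HP2) $\psi(a,bb')=\psi(\Delta_{\mathscr A}(a),b\otimes b')$; (HP3) $\psi(aa',b)=\psi(a\otimes a',\Delta^{\rm op}_{\mathscr B}(b))$, where $\Delta^{\rm op}_{\mathscr B}(b)=\sum b_2\otimes b_1$; (HP4) $\psi(\sigma_{\mathscr A}(a),b)=\psi(a,\sigma_{\mathscr B}^{-1}(b))$; here $\psi(a\otimes a',b\otimes b')=\psi(a,b)\psi(a',b')$. The free product $\mathscr A*\mathscr B$ is the $\mathbb F$-algebra with identity spanned by words alternating between nonidentity basis elements of $\mathscr A$ and of $\mathscr B$, with multiplication by contracted juxtaposition (it is the coproduct of $\mathscr A$ and $\mathscr B$ in the category of unital $\mathbb F$-algebras). *)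

From HB Require Import structures.
From mathcomp Require Import all_boot all_order all_algebra.
Set Implicit Arguments. Unset Strict Implicit. Unset Printing Implicit Defensive.
Import GRing.Theory.
Local Open Scope ring_scope.

(* Over a field F, the tensor product A (x) A is modelled by
   finite formal sums  sum_i u_i (x) v_i  given as  s : seq (A * A); two such
   sums denote the same tensor iff every F-bilinear form takes the same value
   on them (over a field the bilinear forms separate the points of A (x) A).
   Likewise A (x) A (x) A is tested with trilinear forms.  A comultiplication
   is a function  Delta : A -> seq (A * A)  returning one representative
   sum_(a1,a2) a1 (x) a2 of Delta(a) (Sweedler notation). *)

Section HopfDefs.
Variable F : fieldType.

Definition bilinear_form (A B : lmodType F) (beta : A -> B -> F) : Prop :=
  (forall (c : F) (x y : A) (z : B), beta (c *: x + y) z = c * beta x z + beta y z) /\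
  (forall (c : F) (z : A) (x y : B), beta z (c *: x + y) = c * beta z x + beta z y).

Definition trilinear_form (A : lmodType F) (tau : A -> A -> A -> F) : Prop :=
  (forall (c : F) x y u v, tau (c *: x + y) u v = c * tau x u v + tau y u v) /\
  (forall (c : F) x y u v, tau u (c *: x + y) v = c * tau u x v + tau u y v) /\
  (forall (c : F) x y u v, tau u v (c *: x + y) = c * tau u v x + tau u v y).

Definition teval (A : lmodType F) (beta : A -> A -> F) (s : seq (A * A)) : F :=
  \sum_(p <- s) beta p.1 p.2.

Definition teq (A : lmodType F) (s t : seq (A * A)) : Prop :=
  forall beta : A -> A -> F, bilinear_form beta -> teval beta s = teval beta t.

Inductive span_of (A : lmodType F) (X : A -> Prop) : A -> Prop :=
| span0 : span_of X 0
| spanX x : X x -> span_of X x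
| spanD x y : span_of X x -> span_of X y -> span_of X (x + y)
| spanZ (c : F) x : span_of X x -> span_of X (c *: x).

Inductive gen_alg (A : algType F) (X : A -> Prop) : A -> Prop :=
| gen_X x : X x -> gen_alg X x
| gen_1 : gen_alg X 1
| gen_D x y : gen_alg X x -> gen_alg X y -> gen_alg X (x + y)
| gen_Z (c : F) x : gen_alg X x -> gen_alg X (c *: x)
| gen_M x y : gen_alg X x -> gen_alg X y -> gen_alg X (x * y).

Definition generates (A : algType F) (X : A -> Prop) : Prop :=
  forall a : A, gen_alg X a.

Definition coprod_in_span (A : algType F) (Delta : A -> seq (A * A))
  (X : A -> Prop) : Prop :=
  forall x, X x -> exists s : seq (A * A),
    (forall p, p \in s -> span_of X p.1 /\ span_of X p.2) /\ teq (Delta x) s.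

Definition alg_hom (A C : algType F) (f : A -> C) : Prop :=
  [/\ forall (c : F) (x y : A), f (c *: x + y) = c *: f x + f y,
      forall x y : A, f (x * y) = f x * f y & f 1 = 1].

Definition is_hopf (A : algType F) (Delta : A -> seq (A * A)) (eps : A -> F)
  (sigma : A -> A) : Prop :=
  [/\
      forall (c : F) (x y : A), teq (Delta (c *: x + y))
          ([seq (c *: p.1, p.2) | p <- Delta x] ++ Delta y),
      teq (Delta 1) [:: (1, 1)] /\
      forall x y : A, teq (Delta (x * y))
          [seq (p.1 * q.1, p.2 * q.2) | p <- Delta x, q <- Delta y],
      forall (tau : A -> A -> A -> F), trilinear_form tau -> forall a : A,
        \sum_(p <- Delta a) \sum_(q <- Delta p.1) tau q.1 q.2 p.2 =
        \sum_(p <- Delta a) \sum_(q <- Delta p.2) tau p.1 q.1 q.2,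
      alg_hom (eps : A -> F^o) /\
      (forall a : A, \sum_(p <- Delta a) eps p.1 *: p.2 = a /\
                     \sum_(p <- Delta a) eps p.2 *: p.1 = a) &
      (forall (c : F) (x y : A), sigma (c *: x + y) = c *: sigma x + sigma y) /\
      (forall a : A, \sum_(p <- Delta a) sigma p.1 * p.2 = eps a *: 1 /\
                     \sum_(p <- Delta a) p.1 * sigma p.2 = eps a *: 1)].

(* skew-Hopf pairing (HP1)-(HP4); sigmaBinv is the inverse of sigma_B *)
Definition skew_hopf_pairing (A B : algType F)
  (DA : A -> seq (A * A)) (epsA : A -> F) (sigmaA : A -> A)
  (DB : B -> seq (B * B)) (epsB : B -> F) (sigmaBinv : B -> B)
  (psi : A -> B -> F) : Prop :=
  [/\ bilinear_form psi,
      (forall b, psi 1 b = epsB b) /\ (forall a, psi a 1 = epsA a),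
      forall a b b', psi a (b * b') = \sum_(p <- DA a) psi p.1 b * psi p.2 b',
      forall a a' b, psi (a * a') b = \sum_(q <- DB b) psi a q.2 * psi a' q.1 &
      forall a b, psi (sigmaA a) b = psi a (sigmaBinv b)].

Definition is_free_product (A B P : algType F) (iA : A -> P) (iB : B -> P) : Prop :=
  alg_hom iA /\ alg_hom iB /\
  forall (C : algType F) (f : A -> C) (g : B -> C), alg_hom f -> alg_hom g ->
    exists h : P -> C, [/\ alg_hom h, forall a, h (iA a) = f a,
                           forall b, h (iB b) = g b &
      forall h' : P -> C, alg_hom h' -> (forall a, h' (iA a) = f a) ->
                          (forall b, h' (iB b) = g b) -> forall z, h' z = h z].

Definition hab (A B P : algType F) (iA : A -> P) (iB : B -> P)
  (DA : A -> seq (A * A)) (DB : B -> seq (B * B)) (psi : A -> B -> F)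
  (a : A) (b : B) : P :=
  \sum_(p <- DA a) \sum_(q <- DB b) psi p.1 q.1 *: (iB q.2 * iA p.2)
  - \sum_(p <- DA a) \sum_(q <- DB b) psi p.2 q.2 *: (iA p.1 * iB q.1).

Definition in_ideal_gen (P : algType F) (S : P -> Prop) (z : P) : Prop :=
  exists l : seq (P * P * P),
    (forall t, t \in l -> S t.1.2) /\ z = \sum_(t <- l) t.1.1 * t.1.2 * t.2.

End HopfDefs.

From HB Require Import structures.
From mathcomp Require Import all_boot all_order all_algebra.
From mathcomp Require Import boolp classical_sets.
Import GRing.Theory.
Local Open Scope ring_scope.

Set Implicit Arguments. Unset Strict Implicit. Unset Printing Implicit Defensive.

(* Over a field, a nonzero vector is detected by some linear functional (Zorn's
   lemma), so two representatives of the same tensor give the same value under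
   every module-valued bilinear map, and Sweedler sums can be manipulated as
   usual.  The element h_{a,b} is then bilinear, vanishes for a = 1 or b = 1,
   and coassociativity together with (HP2) and (HP3) gives the product rules
     h_{aa',b} = sum psi(a'_1,b_1) h_{a,b_2} a'_2 + sum psi(a_2,b_2) a_1 h_{a',b_1},
     h_{a,bb'} = sum psi(a_1,b_1) b_2 h_{a_2,b'} + sum psi(a_2,b'_2) h_{a_1,b} b'_1.
   An induction on b over the algebra generated by X_B, with a ranging over
   span X_A (which Delta_A maps into span X_A (x) span X_A), followed by an
   induction on a over the algebra generated by X_A, puts every h_{a,b} in the
   ideal generated by the h_{x,y} with x in X_A and y in X_B. *)

Section LinearFunctions.
Variable F : fieldType.
Implicit Types U V : lmodType F.

Section LinearFun.
Variables (U V : lmodType F) (f : U -> V).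
Hypothesis f_linear : linear f.

Lemma linear_fun0 : f 0 = 0.
Proof. by rewrite -(subrr 0) (zmod_morphism_linear f_linear) subrr. Qed.

Lemma linear_funD x y : f (x + y) = f x + f y.
Proof. by rewrite -[x]scale1r f_linear !scale1r. Qed.

Lemma linear_funZ c x : f (c *: x) = c *: f x.
Proof. exact: scalable_linear. Qed.

Lemma linear_fun_sum I (r : seq I) (g : I -> U) :
  f (\sum_(i <- r) g i) = \sum_(i <- r) f (g i).
Proof. by elim: r => [|i r IH]; rewrite ?big_nil ?linear_fun0 // !big_cons linear_funD IH. Qed.

End LinearFun.

Lemma scalar_fun_sum U (f : U -> F) : scalar f ->
  forall I (r : seq I) (g : I -> U), f (\sum_(i <- r) g i) = \sum_(i <- r) f (g i).
Proof. exact: (@linear_fun_sum U F^o). Qed.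

Lemma scalar_funZ U (f : U -> F) : scalar f -> forall c x, f (c *: x) = c * f x.
Proof. exact: (@linear_funZ U F^o). Qed.

Lemma linear_big U V I (r : seq I) (G : I -> U -> V) :
  (forall i, linear (G i)) -> linear (fun x => \sum_(i <- r) G i x).
Proof. by move=> hG c x y; rewrite scaler_sumr -big_split; apply: eq_bigr => i _; exact: hG. Qed.

Lemma linearD_fun U V (f g : U -> V) : linear f -> linear g -> linear (fun x => f x + g x).
Proof. by move=> hf hg c x y; rewrite hf hg scalerDr addrACA. Qed.

Lemma linearB_fun U V (f g : U -> V) : linear f -> linear g -> linear (fun x => f x - g x).
Proof. by move=> hf hg c x y; rewrite hf hg scalerBr opprD addrACA. Qed.

Lemma linear_scale_scalar U V (f : U -> F) (v : V) : scalar f -> linear (fun x => f x *: v).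
Proof. by move=> hf c x y; rewrite hf scalerDl scalerA. Qed.

Lemma linear_scale_const U V (c : F) (f : U -> V) : linear f -> linear (fun x => c *: f x).
Proof. by move=> hf a x y; rewrite hf scalerDr !scalerA mulrC. Qed.

Lemma linear_mull U (V : algType F) (v : V) (f : U -> V) : linear f -> linear (fun x => v * f x).
Proof. by move=> hf c x y; rewrite hf mulrDr scalerAr. Qed.

Lemma linear_mulr U (V : algType F) (v : V) (f : U -> V) : linear f -> linear (fun x => f x * v).
Proof. by move=> hf c x y; rewrite hf mulrDl scalerAl. Qed.

Lemma scalar_mull U (c : F) (f : U -> F) : scalar f -> scalar (fun x => c * f x).
Proof. by move=> hf a x y; rewrite hf mulrDr mulrCA. Qed.

Lemma scalar_mulr U (c : F) (f : U -> F) : scalar f -> scalar (fun x => f x * c).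
Proof. by move=> hf a x y; rewrite hf mulrDl mulrA. Qed.

Definition bilinear_map U V (G : U -> U -> V) :=
  (forall y, linear (G^~ y)) /\ (forall x, linear (G x)).

Definition trilinear_map U V (G : U -> U -> U -> V) :=
  [/\ forall y z, linear (fun x => G x y z), forall x z, linear (fun y => G x y z)
    & forall x y, linear (G x y)].

Lemma bilinear_form_map U (beta : U -> U -> F) :
  bilinear_form beta -> bilinear_map (beta : U -> U -> F^o).
Proof. by case=> h1 h2; split=> z c x y; [apply: h1|apply: h2]. Qed.

End LinearFunctions.

Section Separation.
Variables (F : fieldType) (M : lmodType F) (w : M).
Hypothesis w_neq0 : w != 0.
Local Open Scope classical_set_scope.

Let avoiding_subspace (X : set M) := [/\ forall x y, X x -> X y -> X (x + y),
  forall (c : F) x, X x -> X (c *: x) & ~ X w].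

Lemma exists_complement_hyperplane : exists W : set M,
  [/\ avoiding_subspace W, W 0 & forall v, exists c : F, W (v - c *: w)].
Proof.
have [W [[WD WZ Ww] Wmax]] : exists W, avoiding_subspace W /\
    forall X, W `<` X -> ~ avoiding_subspace X.
  apply: Zorn_bigcup => C CP Ctot; split.
  - move=> x y [X CX Xx] [Y CY Yy].
    have [XY|YX] := Ctot _ _ CX CY.
    + by exists Y => //; case: (CP _ CY) => D _ _; apply: D => //; exact: XY.
    + by exists X => //; case: (CP _ CX) => D _ _; apply: D => //; exact: YX.
  - by move=> c x [X CX Xx]; exists X => //; case: (CP _ CX) => _ Z _; exact: Z.
  - by move=> [X CX Xw]; case: (CP _ CX) => _ _; apply.
have W0 : W 0.
  apply: contrapT => nW0; apply: (Wmax (W `|` [set 0])).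
    by split=> [x Wx|/(_ 0) h]; [left|apply: nW0; apply: h; right].
  split.
  - move=> x y [Wx|->] [Wy|->]; rewrite ?addr0 ?add0r; by [left; apply: WD|left|left|right].
  - by move=> c x [Wx|->]; [left; apply: WZ|right; rewrite scaler0].
  - by move=> [//|/eqP]; rewrite (negbTE w_neq0).
exists W; split=> // v; apply: contrapT => nex.
have nWv : ~ W v by move=> Wv; apply: nex; exists 0; rewrite scale0r subr0.
apply: (Wmax [set u + c *: v | u in W & c in setT]).
  split=> [x Wx|/(_ v) h]; first by exists x => //; exists 0 => //; rewrite scale0r addr0.
  by apply: nWv; apply: h; exists 0 => //; exists 1 => //; rewrite scale1r add0r.
split.
- move=> _ _ [x Wx [c _ <-]] [y Wy [d _ <-]]; exists (x + y); first exact: WD.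
  by exists (c + d) => //; rewrite scalerDl addrACA.
- move=> k _ [x Wx [c _ <-]]; exists (k *: x); first exact: WZ.
  by exists (k * c) => //; rewrite scalerDr scalerA.
- move=> [u Wu [c _ e]]; have [c0|cn0] := eqVneq c 0.
    by apply: Ww; rewrite -e c0 scale0r addr0.
  apply: nex; exists c^-1.
  have -> : v = c^-1 *: (w - u) by rewrite -e addrAC subrr add0r scalerA mulVf // scale1r.
  by rewrite scalerBr addrAC subrr add0r -scaleNr; apply: WZ.
Qed.

Lemma exists_scalar_separating : exists f : M -> F, scalar f /\ f w = 1.
Proof.
have [W [[WD WZ Ww] W0 Wcompl]] := exists_complement_hyperplane.
have coef_uniq v c d : W (v - c *: w) -> W (v - d *: w) -> c = d.
  move=> Wc Wd; apply: contrapT => /eqP; rewrite eq_sym -subr_eq0 => ne; apply: Ww.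
  have := WZ (d - c)^-1 _ (WD _ _ Wc (WZ (-1) _ Wd)); congr W.
  rewrite scaleN1r opprB addrC addrA addrAC (addrAC v) subrr add0r.
  by rewrite [X in _ *: X]addrC -scalerBl scalerA (addrC (-c) d) mulVf // scale1r.
pose f v := projT1 (cid (Wcompl v)).
have fP v : W (v - f v *: w) by rewrite /f; case: cid.
exists f; split; last by apply: coef_uniq (fP w) _; rewrite scale1r subrr.
move=> c x y; apply: (coef_uniq (c *: x + y)) => //.
have := WD _ _ (WZ c _ (fP x)) (fP y); congr W.
by rewrite scalerDl scalerBr scalerA addrACA -opprD.
Qed.

End Separation.

Section Tensors.
Variables (F : fieldType) (U : lmodType F).

Lemma eq_by_scalars (M : lmodType F) (x y : M) :
  (forall f : M -> F, scalar f -> f x = f y) -> x = y.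
Proof.
move=> hxy; apply/eqP; rewrite -subr_eq0; apply: contraT => nz.
have [f [hf f1]] := exists_scalar_separating nz.
move: f1; rewrite -scaleN1r addrC hf mulN1r addrC hxy // subrr => /eqP.
by rewrite eq_sym oner_eq0.
Qed.

Lemma teq_sum_bilinear (M : lmodType F) (G : U -> U -> M) (s t : seq (U * U)) :
  bilinear_map G -> teq s t -> \sum_(p <- s) G p.1 p.2 = \sum_(p <- t) G p.1 p.2.
Proof.
move=> [G1 G2] st; apply: eq_by_scalars => f hf; rewrite !(scalar_fun_sum hf).
by apply: (st (fun x y => f (G x y))); split=> c x y z; rewrite ?G1 ?G2 hf.
Qed.

End Tensors.

Section Ideals.
Variables (F : fieldType) (P : algType F) (S : P -> Prop).
Local Notation I := (in_ideal_gen S).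

Lemma in_ideal_gen0 : I 0.
Proof. by exists [::]; rewrite big_nil. Qed.

Lemma in_ideal_genD x y : I x -> I y -> I (x + y).
Proof.
move=> [l1 [h1 ->]] [l2 [h2 ->]]; exists (l1 ++ l2); rewrite big_cat; split=> //.
by move=> t; rewrite mem_cat => /orP[/h1|/h2].
Qed.

Lemma in_ideal_genZ c x : I x -> I (c *: x).
Proof.
move=> [l [h ->]]; exists [seq (c *: t.1.1, t.1.2, t.2) | t <- l]; split.
  by move=> t /mapP[u /h ? ->].
by rewrite big_map scaler_sumr; apply: eq_bigr => t _ /=; rewrite -!scalerAl.
Qed.

Lemma in_ideal_genMl y x : I x -> I (y * x).
Proof.
move=> [l [h ->]]; exists [seq (y * t.1.1, t.1.2, t.2) | t <- l]; split.
  by move=> t /mapP[u /h ? ->].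
by rewrite big_map mulr_sumr; apply: eq_bigr => t _ /=; rewrite !mulrA.
Qed.

Lemma in_ideal_genMr y x : I x -> I (x * y).
Proof.
move=> [l [h ->]]; exists [seq (t.1.1, t.1.2, t.2 * y) | t <- l]; split.
  by move=> t /mapP[u /h ? ->].
by rewrite big_map mulr_suml; apply: eq_bigr => t _ /=; rewrite !mulrA.
Qed.

Lemma in_ideal_gen_gen g : S g -> I g.
Proof.
move=> Sg; exists [:: (1, g, 1)]; rewrite big_seq1 mul1r mulr1.
by split=> // t; rewrite inE => /eqP ->.
Qed.

Lemma in_ideal_gen_sum (J : eqType) (r : seq J) (f : J -> P) :
  (forall j, j \in r -> I (f j)) -> I (\sum_(j <- r) f j).
Proof.
elim: r => [|j r IH] If; first by rewrite big_nil; exact: in_ideal_gen0.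
rewrite big_cons; apply: in_ideal_genD; first by apply: If; rewrite inE eqxx.
by apply: IH => k kr; apply: If; rewrite inE kr orbT.
Qed.

Lemma in_ideal_gen_span (U : lmodType F) (X : U -> Prop) (f : U -> P) :
  linear f -> (forall x, X x -> I (f x)) -> forall x, span_of X x -> I (f x).
Proof.
move=> hf IX x; elim=> [|y /IX //|y z _ Iy _ Iz|c y _ Iy].
- by rewrite linear_fun0 //; exact: in_ideal_gen0.
- by rewrite linear_funD //; apply: in_ideal_genD.
- by rewrite linear_funZ //; apply: in_ideal_genZ.
Qed.

End Ideals.

Section Comultiplication.
Variables (F : fieldType) (A : algType F) (D : A -> seq (A * A)).
Implicit Types M : lmodType F.

Hypothesis D_linear : forall (c : F) (x y : A),
  teq (D (c *: x + y)) ([seq (c *: p.1, p.2) | p <- D x] ++ D y).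

Lemma sweedler_linear M (G : A -> A -> M) :
  bilinear_map G -> linear (fun a => \sum_(p <- D a) G p.1 p.2).
Proof.
move=> hG c x y; rewrite (teq_sum_bilinear hG (D_linear c x y)) big_cat big_map scaler_sumr.
by congr (_ + _); apply: eq_bigr => p _; rewrite (linear_funZ (hG.1 _)).
Qed.

Lemma sweedler_span (X : A -> Prop) : coprod_in_span D X -> forall a, span_of X a ->
  exists s : seq (A * A),
    (forall p, p \in s -> span_of X p.1 /\ span_of X p.2) /\ teq (D a) s.
Proof.
move=> hDX a.
have teval_linear beta : bilinear_form beta -> linear (fun a => teval beta (D a) : F^o).
  by move=> hbeta; apply: sweedler_linear; apply: bilinear_form_map.
elim=> [|x /hDX //|x y _ [sx [hx ex]] _ [sy [hy ey]]|c x _ [sx [hx ex]]].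
- exists [::]; split=> // beta hbeta.
  by rewrite [RHS]big_nil (linear_fun0 (teval_linear _ hbeta)).
- exists (sx ++ sy); split; first by move=> p; rewrite mem_cat => /orP[/hx|/hy].
  move=> beta hbeta; rewrite /teval big_cat -/(teval beta sx) -/(teval beta sy) -ex // -ey //.
  exact: (linear_funD (teval_linear _ hbeta)).
- exists [seq (c *: p.1, p.2) | p <- sx]; split.
    by move=> p /mapP[u /hx [h1 h2] ->]; split=> //; apply: spanZ.
  move=> beta hbeta; rewrite /teval big_map.
  under eq_bigr do rewrite (scalar_funZ (fun k u v => hbeta.1 k u v _)).
  rewrite -mulr_sumr -/(teval beta sx) -ex //.
  exact: (linear_funZ (teval_linear _ hbeta)).
Qed.

Lemma sweedler_unit M (G : A -> A -> M) : teq (D 1) [:: (1, 1)] ->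
  bilinear_map G -> \sum_(p <- D 1) G p.1 p.2 = G 1 1.
Proof. by move=> D1 hG; rewrite (teq_sum_bilinear hG D1) big_seq1. Qed.

Lemma sweedler_mul M (G : A -> A -> M) x y :
  teq (D (x * y)) [seq (p.1 * q.1, p.2 * q.2) | p <- D x, q <- D y] ->
  bilinear_map G -> \sum_(p <- D (x * y)) G p.1 p.2 =
    \sum_(p <- D x) \sum_(q <- D y) G (p.1 * q.1) (p.2 * q.2).
Proof. by move=> Dxy hG; rewrite (teq_sum_bilinear hG Dxy) big_allpairs_dep. Qed.

Hypothesis D_coassoc : forall tau : A -> A -> A -> F,
  trilinear_form tau -> forall a,
  \sum_(p <- D a) \sum_(q <- D p.1) tau q.1 q.2 p.2 =
  \sum_(p <- D a) \sum_(q <- D p.2) tau p.1 q.1 q.2.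

Lemma sweedler_coassoc M (G : A -> A -> A -> M) : trilinear_map G -> forall a,
  \sum_(p <- D a) \sum_(q <- D p.1) G q.1 q.2 p.2 =
  \sum_(p <- D a) \sum_(q <- D p.2) G p.1 q.1 q.2.
Proof.
move=> [G1 G2 G3] a; apply: eq_by_scalars => f hf; rewrite !(scalar_fun_sum hf).
under eq_bigr do rewrite (scalar_fun_sum hf).
under [RHS]eq_bigr do rewrite (scalar_fun_sum hf).
apply: (D_coassoc (tau := fun x y z => f (G x y z))).
by split; [|split]=> c x y u v; rewrite ?G1 ?G2 ?G3 hf.
Qed.

End Comultiplication.

Lemma sumr2B (V : zmodType) I J (r : seq I) (s : I -> seq J) (f g : I -> J -> V) :
  \sum_(i <- r) \sum_(j <- s i) (f i j - g i j) =
  \sum_(i <- r) \sum_(j <- s i) f i j - \sum_(i <- r) \sum_(j <- s i) g i j.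
Proof. by rewrite -sumrB; apply: eq_bigr => i _; rewrite sumrB. Qed.

Section FreeProductIdeal.
Variables (F : fieldType) (A B P : algType F).
Variables (DA : A -> seq (A * A)) (epsA : A -> F) (DB : B -> seq (B * B)) (epsB : B -> F).
Variables (psi : A -> B -> F) (iA : A -> P) (iB : B -> P).

Hypothesis DA_linear : forall (c : F) (x y : A),
  teq (DA (c *: x + y)) ([seq (c *: p.1, p.2) | p <- DA x] ++ DA y).
Hypothesis DA_unit : teq (DA 1) [:: (1, 1)].
Hypothesis DA_mul : forall x y : A,
  teq (DA (x * y)) [seq (p.1 * q.1, p.2 * q.2) | p <- DA x, q <- DA y].
Hypothesis DA_coassoc : forall tau : A -> A -> A -> F, trilinear_form tau -> forall a,
  \sum_(p <- DA a) \sum_(q <- DA p.1) tau q.1 q.2 p.2 =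
  \sum_(p <- DA a) \sum_(q <- DA p.2) tau p.1 q.1 q.2.
Hypothesis DA_counit : forall a : A,
  \sum_(p <- DA a) epsA p.1 *: p.2 = a /\ \sum_(p <- DA a) epsA p.2 *: p.1 = a.

Hypothesis DB_linear : forall (c : F) (x y : B),
  teq (DB (c *: x + y)) ([seq (c *: q.1, q.2) | q <- DB x] ++ DB y).
Hypothesis DB_unit : teq (DB 1) [:: (1, 1)].
Hypothesis DB_mul : forall x y : B,
  teq (DB (x * y)) [seq (p.1 * q.1, p.2 * q.2) | p <- DB x, q <- DB y].
Hypothesis DB_coassoc : forall tau : B -> B -> B -> F, trilinear_form tau -> forall b,
  \sum_(q <- DB b) \sum_(r <- DB q.1) tau r.1 r.2 q.2 =
  \sum_(q <- DB b) \sum_(r <- DB q.2) tau q.1 r.1 r.2.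
Hypothesis DB_counit : forall b : B,
  \sum_(q <- DB b) epsB q.1 *: q.2 = b /\ \sum_(q <- DB b) epsB q.2 *: q.1 = b.

Hypothesis psi_bilinear : bilinear_form psi.
Hypothesis psi1l : forall b, psi 1 b = epsB b.
Hypothesis psi1r : forall a, psi a 1 = epsA a.
Hypothesis psi_mulr : forall a b b',
  psi a (b * b') = \sum_(p <- DA a) psi p.1 b * psi p.2 b'.
Hypothesis psi_mull : forall a a' b,
  psi (a * a') b = \sum_(q <- DB b) psi a q.2 * psi a' q.1.

Hypothesis iA_hom : alg_hom iA.
Hypothesis iB_hom : alg_hom iB.

Let iA_linear : linear iA. Proof. by case: iA_hom. Qed.
Let iB_linear : linear iB. Proof. by case: iB_hom. Qed.
HB.instance Definition _ := GRing.isLinear.Build F A P *:%R iA iA_linear.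
HB.instance Definition _ := GRing.isLinear.Build F B P *:%R iB iB_linear.
HB.instance Definition _ := GRing.isMonoidMorphism.Build A P iA
  (let: And3 _ hM h1 := iA_hom in (h1, hM)).
HB.instance Definition _ := GRing.isMonoidMorphism.Build B P iB
  (let: And3 _ hM h1 := iB_hom in (h1, hM)).

Let psi_scalarl b : scalar (psi^~ b). Proof. by move=> c x y; case: psi_bilinear. Qed.
Let psi_scalarr a : scalar (psi a). Proof. by move=> c x y; case: psi_bilinear. Qed.

Definition quadrilinear (T : A -> A -> B -> B -> P) :=
  [/\ forall v y z, linear (fun u => T u v y z), forall u y z, linear (fun v => T u v y z),
      forall u v z, linear (fun y => T u v y z) & forall u v y, linear (T u v y)].

Section DoubleSweedlerSum.
Variable T : A -> A -> B -> B -> P.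
Hypothesis T_quadrilinear : quadrilinear T.

Definition sweedler2 a b := \sum_(p <- DA a) \sum_(q <- DB b) T p.1 p.2 q.1 q.2.

Let kernelA b : bilinear_map (fun u v => \sum_(q <- DB b) T u v q.1 q.2).
Proof. by case: T_quadrilinear => T1 T2 _ _; split=> *; apply: linear_big. Qed.

Let kernelB a : bilinear_map (fun y z => \sum_(p <- DA a) T p.1 p.2 y z).
Proof. by case: T_quadrilinear => _ _ T3 T4; split=> *; apply: linear_big. Qed.

Let sweedler2_exchange a b :
  sweedler2 a b = \sum_(q <- DB b) \sum_(p <- DA a) T p.1 p.2 q.1 q.2.
Proof. exact: exchange_big. Qed.

Lemma sweedler2_linearl b : linear (sweedler2 ^~ b).
Proof. exact: (sweedler_linear DA_linear (kernelA b)). Qed.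

Lemma sweedler2_linearr a : linear (sweedler2 a).
Proof.
move=> c x y; rewrite !sweedler2_exchange.
exact: (sweedler_linear DB_linear (kernelB a)).
Qed.

Lemma sweedler2_unitl b : sweedler2 1 b = \sum_(q <- DB b) T 1 1 q.1 q.2.
Proof. exact: (sweedler_unit DA_unit (kernelA b)). Qed.

Lemma sweedler2_unitr a : sweedler2 a 1 = \sum_(p <- DA a) T p.1 p.2 1 1.
Proof. by rewrite sweedler2_exchange (sweedler_unit DB_unit (kernelB a)). Qed.

Lemma sweedler2_mull a a' b : sweedler2 (a * a') b =
  \sum_(p <- DA a) \sum_(p' <- DA a') \sum_(q <- DB b)
    T (p.1 * p'.1) (p.2 * p'.2) q.1 q.2.
Proof. exact: (sweedler_mul (DA_mul a a') (kernelA b)). Qed.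

Lemma sweedler2_mulr a b b' : sweedler2 a (b * b') =
  \sum_(q <- DB b) \sum_(q' <- DB b') \sum_(p <- DA a)
    T p.1 p.2 (q.1 * q'.1) (q.2 * q'.2).
Proof. by rewrite sweedler2_exchange (sweedler_mul (DB_mul b b') (kernelB a)). Qed.

End DoubleSweedlerSum.

Local Notation hab := (hab iA iB DA DB psi).

Definition hab_ba := sweedler2 (fun u v y z => psi u y *: (iB z * iA v)).
Definition hab_ab := sweedler2 (fun u v y z => psi v z *: (iA u * iB y)).

Lemma habE a b : hab a b = hab_ba a b - hab_ab a b. Proof. by []. Qed.

Let ba_quadrilinear : quadrilinear (fun u v y z => psi u y *: (iB z * iA v)).
Proof.
split=> *; [exact: linear_scale_scalar | exact: linear_scale_const (linear_mull _ _)
  | exact: linear_scale_scalar | exact: linear_scale_const (linear_mulr _ _)].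
Qed.

Let ab_quadrilinear : quadrilinear (fun u v y z => psi v z *: (iA u * iB y)).
Proof.
split=> *; [exact: linear_scale_const (linear_mulr _ _) | exact: linear_scale_scalar
  | exact: linear_scale_const (linear_mull _ _) | exact: linear_scale_scalar].
Qed.

Lemma hab_linearl b : linear (hab ^~ b).
Proof.
exact: linearB_fun (sweedler2_linearl ba_quadrilinear b) (sweedler2_linearl ab_quadrilinear b).
Qed.

Lemma hab_linearr a : linear (hab a).
Proof.
exact: linearB_fun (sweedler2_linearr ba_quadrilinear a) (sweedler2_linearr ab_quadrilinear a).
Qed.

Lemma hab1l b : hab 1 b = 0.
Proof.
rewrite habE /hab_ba /hab_ab !sweedler2_unitl //=.
transitivity (iB (\sum_(q <- DB b) epsB q.1 *: q.2) - iB (\sum_(q <- DB b) epsB q.2 *: q.1)).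
  by rewrite !(linear_sum iB); congr (_ - _); apply: eq_bigr => q _;
    rewrite linearZ rmorph1 ?mulr1 ?mul1r psi1l.
by case: (DB_counit b) => -> ->; rewrite subrr.
Qed.

Lemma hab1r a : hab a 1 = 0.
Proof.
rewrite habE /hab_ba /hab_ab !sweedler2_unitr //=.
transitivity (iA (\sum_(p <- DA a) epsA p.1 *: p.2) - iA (\sum_(p <- DA a) epsA p.2 *: p.1)).
  by rewrite !(linear_sum iA); congr (_ - _); apply: eq_bigr => p _;
    rewrite linearZ rmorph1 ?mulr1 ?mul1r psi1r.
by case: (DA_counit a) => -> ->; rewrite subrr.
Qed.

Section PairingSweedler.
Variables (M : lmodType F).

Lemma sum_psi_mull_fst (K : B -> M) x x' b : linear K ->
  \sum_(q <- DB b) psi (x * x') q.1 *: K q.2 =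
  \sum_(q <- DB b) psi x' q.1 *: \sum_(r <- DB q.2) psi x r.1 *: K r.2.
Proof.
move=> hK; pose G u v w := (psi x v * psi x' u) *: K w.
have hG : trilinear_map G.
  split=> *; [exact/linear_scale_scalar/scalar_mull | exact/linear_scale_scalar/scalar_mulr
    | exact: linear_scale_const].
under eq_bigr do rewrite psi_mull scaler_suml.
have := sweedler_coassoc DB_coassoc hG b; rewrite /G => ->.
by apply: eq_bigr => q _; rewrite scaler_sumr; apply: eq_bigr => r _; rewrite scalerA mulrC.
Qed.

Lemma sum_psi_mull_snd (K : B -> M) x x' b : linear K ->
  \sum_(q <- DB b) psi (x * x') q.2 *: K q.1 =
  \sum_(q <- DB b) psi x q.2 *: \sum_(r <- DB q.1) psi x' r.2 *: K r.1.
Proof.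
move=> hK; pose G u v w := (psi x w * psi x' v) *: K u.
have hG : trilinear_map G.
  split=> *; [exact: linear_scale_const | exact/linear_scale_scalar/scalar_mull
    | exact/linear_scale_scalar/scalar_mulr].
under eq_bigr do rewrite psi_mull scaler_suml.
have := sweedler_coassoc DB_coassoc hG b; rewrite /G => <-.
by apply: eq_bigr => q _; rewrite scaler_sumr; apply: eq_bigr => r _; rewrite scalerA.
Qed.

Lemma sum_psi_mulr_fst (K : A -> M) y y' a : linear K ->
  \sum_(p <- DA a) psi p.1 (y * y') *: K p.2 =
  \sum_(p <- DA a) psi p.1 y *: \sum_(r <- DA p.2) psi r.1 y' *: K r.2.
Proof.
move=> hK; pose G u v w := (psi u y * psi v y') *: K w.
have hG : trilinear_map G.
  split=> *; [exact/linear_scale_scalar/scalar_mulr | exact/linear_scale_scalar/scalar_mull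
    | exact: linear_scale_const].
under eq_bigr do rewrite psi_mulr scaler_suml.
have := sweedler_coassoc DA_coassoc hG a; rewrite /G => ->.
by apply: eq_bigr => p _; rewrite scaler_sumr; apply: eq_bigr => r _; rewrite scalerA.
Qed.

Lemma sum_psi_mulr_snd (K : A -> M) y y' a : linear K ->
  \sum_(p <- DA a) psi p.2 (y * y') *: K p.1 =
  \sum_(p <- DA a) psi p.2 y' *: \sum_(r <- DA p.1) psi r.2 y *: K r.1.
Proof.
move=> hK; pose G u v w := (psi v y * psi w y') *: K u.
have hG : trilinear_map G.
  split=> *; [exact: linear_scale_const | exact/linear_scale_scalar/scalar_mulr
    | exact/linear_scale_scalar/scalar_mull].
under eq_bigr do rewrite psi_mulr scaler_suml.
have := sweedler_coassoc DA_coassoc hG a; rewrite /G => <-.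
by apply: eq_bigr => p _; rewrite scaler_sumr; apply: eq_bigr => r _; rewrite scalerA mulrC.
Qed.

End PairingSweedler.

Lemma hab_ba_mull a a' b : hab_ba (a * a') b =
  \sum_(p' <- DA a') \sum_(q <- DB b) psi p'.1 q.1 *: (hab_ba a q.2 * iA p'.2).
Proof.
rewrite {1}/hab_ba (sweedler2_mull ba_quadrilinear) /=.
transitivity (\sum_(p <- DA a) \sum_(p' <- DA a') \sum_(q <- DB b) psi p'.1 q.1 *:
  \sum_(r <- DB q.2) psi p.1 r.1 *: (iB r.2 * iA p.2 * iA p'.2)).
  apply: eq_bigr => p _; apply: eq_bigr => p' _; under eq_bigr do rewrite rmorphM mulrA.
  exact: sum_psi_mull_fst (linear_mulr _ (linear_mulr _ _)).
rewrite exchange_big; apply: eq_bigr => p' _; rewrite exchange_big; apply: eq_bigr => q _.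
rewrite mulr_suml -scaler_sumr; congr (_ *: _); apply: eq_bigr => p _.
by rewrite mulr_suml; apply: eq_bigr => r _; rewrite -scalerAl.
Qed.

Lemma hab_ab_mull a a' b : hab_ab (a * a') b =
  \sum_(p <- DA a) \sum_(q <- DB b) psi p.2 q.2 *: (iA p.1 * hab_ab a' q.1).
Proof.
rewrite {1}/hab_ab (sweedler2_mull ab_quadrilinear) /=; apply: eq_bigr => p _.
transitivity (\sum_(p' <- DA a') \sum_(q <- DB b) psi p.2 q.2 *:
  \sum_(r <- DB q.1) psi p'.2 r.2 *: (iA p.1 * (iA p'.1 * iB r.1))).
  apply: eq_bigr => p' _; under eq_bigr do rewrite rmorphM -mulrA.
  exact: sum_psi_mull_snd (linear_mull _ (linear_mull _ _)).
rewrite exchange_big; apply: eq_bigr => q _.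
rewrite mulr_sumr -scaler_sumr; congr (_ *: _); apply: eq_bigr => p' _.
by rewrite mulr_sumr; apply: eq_bigr => r _; rewrite -scalerAr.
Qed.

Lemma hab_cross_mull a a' b :
  \sum_(p' <- DA a') \sum_(q <- DB b) psi p'.1 q.1 *: (hab_ab a q.2 * iA p'.2) =
  \sum_(p <- DA a) \sum_(q <- DB b) psi p.2 q.2 *: (iA p.1 * hab_ba a' q.1).
Proof.
pose G (p p' : A * A) (x y z : B) :=
  (psi p'.1 x * psi p.2 z) *: (iA p.1 * iB y * iA p'.2).
have hG p p' : trilinear_map (G p p').
  split=> *; [exact/linear_scale_scalar/scalar_mulr
    | exact: linear_scale_const (linear_mulr _ (linear_mull _ _))
    | exact/linear_scale_scalar/scalar_mull].
transitivity (\sum_(p <- DA a) \sum_(p' <- DA a') \sum_(q <- DB b) \sum_(r <- DB q.2)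
  G p p' q.1 r.1 r.2).
  rewrite [RHS]exchange_big; apply: eq_bigr => p' _; rewrite [RHS]exchange_big.
  apply: eq_bigr => q _; rewrite mulr_suml scaler_sumr; apply: eq_bigr => p _.
  by rewrite mulr_suml scaler_sumr; apply: eq_bigr => r _; rewrite -scalerAl scalerA.
under eq_bigr do under eq_bigr do rewrite -(sweedler_coassoc DB_coassoc (hG _ _)).
apply: eq_bigr => p _; rewrite exchange_big; apply: eq_bigr => q _.
rewrite mulr_sumr scaler_sumr; apply: eq_bigr => p' _.
rewrite mulr_sumr scaler_sumr; apply: eq_bigr => r _.
by rewrite -scalerAr scalerA mulrC mulrA.
Qed.

Lemma hab_mull a a' b : hab (a * a') b =
  \sum_(p' <- DA a') \sum_(q <- DB b) psi p'.1 q.1 *: (hab a q.2 * iA p'.2) +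
  \sum_(p <- DA a) \sum_(q <- DB b) psi p.2 q.2 *: (iA p.1 * hab a' q.1).
Proof.
under eq_bigr do under eq_bigr do rewrite habE mulrBl scalerBr.
under [X in _ + X]eq_bigr do under eq_bigr do rewrite habE mulrBr scalerBr.
by rewrite !sumr2B hab_cross_mull habE hab_ba_mull hab_ab_mull addrA subrK.
Qed.

Lemma hab_ba_mulr a b b' : hab_ba a (b * b') =
  \sum_(p <- DA a) \sum_(q <- DB b) psi p.1 q.1 *: (iB q.2 * hab_ba p.2 b').
Proof.
rewrite {1}/hab_ba (sweedler2_mulr ba_quadrilinear) /=.
transitivity (\sum_(q <- DB b) \sum_(p <- DA a) \sum_(q' <- DB b') psi p.1 q.1 *:
  \sum_(r <- DA p.2) psi r.1 q'.1 *: (iB q.2 * iB q'.2 * iA r.2)).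
  apply: eq_bigr => q _; rewrite [RHS]exchange_big; apply: eq_bigr => q' _.
  under eq_bigr do rewrite rmorphM.
  exact: sum_psi_mulr_fst (linear_mull _ _).
rewrite exchange_big; apply: eq_bigr => p _; apply: eq_bigr => q _.
rewrite -scaler_sumr exchange_big mulr_sumr; congr (_ *: _); apply: eq_bigr => r _.
by rewrite mulr_sumr; apply: eq_bigr => q' _; rewrite -scalerAr mulrA.
Qed.

Lemma hab_ab_mulr a b b' : hab_ab a (b * b') =
  \sum_(p <- DA a) \sum_(q' <- DB b') psi p.2 q'.2 *: (hab_ab p.1 b * iB q'.1).
Proof.
rewrite {1}/hab_ab (sweedler2_mulr ab_quadrilinear) /=.
transitivity (\sum_(q' <- DB b') \sum_(p <- DA a) \sum_(q <- DB b) psi p.2 q'.2 *: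
  \sum_(r <- DA p.1) psi r.2 q.2 *: (iA r.1 * iB q.1 * iB q'.1)).
  rewrite exchange_big; apply: eq_bigr => q' _; rewrite [RHS]exchange_big.
  apply: eq_bigr => q _; under eq_bigr do rewrite rmorphM mulrA.
  exact: sum_psi_mulr_snd (linear_mulr _ (linear_mulr _ _)).
rewrite exchange_big; apply: eq_bigr => p _; apply: eq_bigr => q' _.
rewrite -scaler_sumr exchange_big mulr_suml; congr (_ *: _); apply: eq_bigr => r _.
by rewrite mulr_suml; apply: eq_bigr => q _; rewrite -scalerAl.
Qed.

Lemma hab_cross_mulr a b b' :
  \sum_(p <- DA a) \sum_(q <- DB b) psi p.1 q.1 *: (iB q.2 * hab_ab p.2 b') =
  \sum_(p <- DA a) \sum_(q' <- DB b') psi p.2 q'.2 *: (hab_ba p.1 b * iB q'.1).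
Proof.
pose G (q q' : B * B) (x y z : A) :=
  (psi x q.1 * psi z q'.2) *: (iB q.2 * iA y * iB q'.1).
have hG q q' : trilinear_map (G q q').
  split=> *; [exact/linear_scale_scalar/scalar_mulr
    | exact: linear_scale_const (linear_mulr _ (linear_mull _ _))
    | exact/linear_scale_scalar/scalar_mull].
transitivity (\sum_(q <- DB b) \sum_(q' <- DB b') \sum_(p <- DA a) \sum_(r <- DA p.2)
  G q q' p.1 r.1 r.2).
  rewrite exchange_big; apply: eq_bigr => q _; rewrite [RHS]exchange_big.
  apply: eq_bigr => p _; rewrite [RHS]exchange_big mulr_sumr scaler_sumr.
  apply: eq_bigr => r _; rewrite mulr_sumr scaler_sumr; apply: eq_bigr => q' _.
  by rewrite -scalerAr scalerA mulrA.
under eq_bigr do under eq_bigr do rewrite -(sweedler_coassoc DA_coassoc (hG _ _)).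
rewrite exchange_big; under eq_bigr do rewrite exchange_big.
rewrite exchange_big; apply: eq_bigr => p _; apply: eq_bigr => q' _.
rewrite exchange_big mulr_suml scaler_sumr; apply: eq_bigr => r _.
by rewrite mulr_suml scaler_sumr; apply: eq_bigr => q _; rewrite -scalerAl scalerA mulrC.
Qed.

Lemma hab_mulr a b b' : hab a (b * b') =
  \sum_(p <- DA a) \sum_(q <- DB b) psi p.1 q.1 *: (iB q.2 * hab p.2 b') +
  \sum_(p <- DA a) \sum_(q' <- DB b') psi p.2 q'.2 *: (hab p.1 b * iB q'.1).
Proof.
under eq_bigr do under eq_bigr do rewrite habE mulrBr scalerBr.
under [X in _ + X]eq_bigr do under eq_bigr do rewrite habE mulrBl scalerBr.
by rewrite !sumr2B hab_cross_mulr habE hab_ba_mulr hab_ab_mulr addrA subrK.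
Qed.

Variables (XA : A -> Prop) (XB : B -> Prop).
Hypothesis XA_generates : generates XA.
Hypothesis XB_generates : generates XB.
Hypothesis XA_coprod : coprod_in_span DA XA.

Local Notation IX := (in_ideal_gen (fun w => exists a b, [/\ XA a, XB b & w = hab a b])).

Lemma hab_span_in_ideal a b : span_of XA a -> IX (hab a b).
Proof.
elim: (XB_generates b) a => {b} [y Xy| |x y _ Ix _ Iy|c x _ Ix|x y _ Ix _ Iy] a Xa.
- apply: (in_ideal_gen_span (hab_linearl y)) Xa => x Xx.
  by apply: in_ideal_gen_gen; exists x, y.
- by rewrite hab1r; exact: in_ideal_gen0.
- by rewrite (linear_funD (hab_linearr a)); apply: in_ideal_genD; [exact: Ix | exact: Iy].
- by rewrite (linear_funZ (hab_linearr a)); apply: in_ideal_genZ; exact: Ix.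
have [s [s_span Das]] := sweedler_span DA_linear XA_coprod Xa.
pose Phi u v := \sum_(q <- DB x) psi u q.1 *: (iB q.2 * hab v y) +
  \sum_(q' <- DB y) psi v q'.2 *: (hab u x * iB q'.1).
have hPhi : bilinear_map Phi.
  split=> z; apply: linearD_fun; apply: linear_big => q.
  - exact: linear_scale_scalar.
  - exact: linear_scale_const (linear_mulr _ (hab_linearl x)).
  - exact: linear_scale_const (linear_mull _ (hab_linearl y)).
  - exact: linear_scale_scalar.
rewrite hab_mulr -big_split (teq_sum_bilinear hPhi Das).
apply: in_ideal_gen_sum => p /s_span [p1_span p2_span].
apply: in_ideal_genD; apply: in_ideal_gen_sum => q _; apply: in_ideal_genZ.
  by apply: in_ideal_genMl; exact: Iy.
by apply: in_ideal_genMr; exact: Ix.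
Qed.

Lemma hab_in_ideal a b : IX (hab a b).
Proof.
elim: (XA_generates a) b => {a} [x Xx| |x y _ Ix _ Iy|c x _ Ix|x y _ Ix _ Iy] b.
- exact/hab_span_in_ideal/spanX.
- by rewrite hab1l; exact: in_ideal_gen0.
- by rewrite (linear_funD (hab_linearl b)); exact: in_ideal_genD.
- by rewrite (linear_funZ (hab_linearl b)); exact: in_ideal_genZ.
rewrite hab_mull; apply: in_ideal_genD; apply: in_ideal_gen_sum => p _;
  apply: in_ideal_gen_sum => q _; apply: in_ideal_genZ.
  exact: in_ideal_genMr.
exact: in_ideal_genMl.
Qed.

Lemma ideal_hab_generated z :
  in_ideal_gen (fun w => exists a b, w = hab a b) z <-> IX z.
Proof.
split=> [[l [hl ->]]|[l [hl ->]]].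
  apply: in_ideal_gen_sum => t /hl [a [b ->]].
  exact/in_ideal_genMr/in_ideal_genMl/hab_in_ideal.
by exists l; split=> // t /hl [a [b [_ _ ->]]]; exists a, b.
Qed.

End FreeProductIdeal.

Theorem lemma2p1p1 (F : fieldType) (A B : algType F)
  (DA : A -> seq (A * A)) (epsA : A -> F) (sigmaA : A -> A)
  (DB : B -> seq (B * B)) (epsB : B -> F) (sigmaB sigmaBinv : B -> B)
  (hA : is_hopf DA epsA sigmaA) (hB : is_hopf DB epsB sigmaB)
  (hinv1 : cancel sigmaB sigmaBinv) (hinv2 : cancel sigmaBinv sigmaB)
  (psi : A -> B -> F)
  (hpsi : skew_hopf_pairing DA epsA sigmaA DB epsB sigmaBinv psi)
  (P : algType F) (iA : A -> P) (iB : B -> P) (hP : is_free_product iA iB)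
  (XA : A -> Prop) (XB : B -> Prop)
  (hXA : generates XA) (hXB : generates XB)
  (hDXA : coprod_in_span DA XA) (hDXB : coprod_in_span DB XB) :
  forall z : P,
    in_ideal_gen (fun w => exists a b, w = hab iA iB DA DB psi a b) z <->
    in_ideal_gen (fun w => exists a b, [/\ XA a, XB b & w = hab iA iB DA DB psi a b]) z.
Proof.
case: hA => DA_linear [DA_unit DA_mul] DA_coassoc [_ DA_counit] _.
case: hB => DB_linear [DB_unit DB_mul] DB_coassoc [_ DB_counit] _.
case: hpsi => psi_bilinear [psi1l psi1r] psi_mulr psi_mull _.
case: hP => iA_hom [iB_hom _].
exact: (ideal_hab_generated DA_linear DA_unit DA_mul DA_coassoc DA_counit
  DB_linear DB_unit DB_mul DB_coassoc DB_counit psi_bilinear psi1l psi1r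
  psi_mulr psi_mull iA_hom iB_hom hXA hXB hDXA).
Qed.
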